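(* Let $(q_n)$ be the Fibonacci Quilt sequence and let $m$ be a positive integer. If $m=c_1q_1+c_2q_2+\cdots+c_nq_n$ with nonnegative integers $c_i$ is any decomposition $\mathcal D(m)$ of $m$ as a sum of Fibonacci Quilt numbers (not necessarily FQ-legal, repetitions allowed), with number of summands $c_1+\cdots+c_n$, then the number of summands of the Greedy-6 decomposition $\mathcal G(m)$ is at most $c_1+c_2+\cdots+c_n$.
   Context: Given an increasing sequence of positive integers $(q_i)_{i\ge1}$, an FQ-legal decomposition of an integer $m\ge0$ is an expression $m=q_{\ell_1}+q_{\ell_2}+\cdots+q_{\ell_t}$ ($t\ge0$, the empty sum representing $0$) with distinct indices $\ell_1>\ell_2>\cdots>\ell_t$ such that $|\ell_i-\ell_j|\notin\{1,3,4\}$ for all $i,j$, and $\{1,3\}\not\subset\{\ell_1,\dots,\ell_t\}$. The Fibonacci Quilt sequence is the increasing sequence of positive integers $(q_i)_{i\ge1}$ in which each $q_i$ is the smallest positive integer having no FQ-legal decomposition using only $q_1,\dots,q_{i-1}$. Its first terms are $1,2,3,4,5,7,9,12,16,21,28,37,49,\dots$. The Greedy-6 decomposition $\mathcal G(m)$ of a positive integer $m$ is defined recursively: if $m=q_n$ for some $n$, then $\mathcal G(m)=q_n$; if $m=6$, then $\mathcal G(6)=q_4+q_2$; otherwise ($m\ge q_6=7$ and $m$ not a term of the sequence) let $\ell_1$ be such that $q_{\ell_1}<m<q_{\ell_1+1}$, set $x=m-q_{\ell_1}>0$, and $\mathcal G(m)=q_{\ell_1}+\mathcal G(x)$. *)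

From mathcomp Require Import all_boot.
Set Implicit Arguments. Unset Strict Implicit. Unset Printing Implicit Defensive.

(* Sequences are indexed from 1: q 1, q 2, ...; the value q 0 is irrelevant. *)

Definition FQ_legal_below (q : nat -> nat) (i m : nat) (s : seq nat) : Prop :=
  [/\ uniq s,
      all (fun l => (0 < l) && (l < i)) s,
      (forall a b, a \in s -> b \in s ->
          [/\ b + 1 != a, b + 3 != a & b + 4 != a]),
      ~~ ((1 \in s) && (3 \in s))
    & \sum_(l <- s) q l = m].

Definition is_FQ_seq (q : nat -> nat) : Prop :=
  (forall i, 0 < i -> q i < q i.+1) /\
  (forall i, 0 < i ->
     [/\ 0 < q i,
         (forall s, ~ FQ_legal_below q i (q i) s)
       & (forall k, 0 < k < q i -> exists s, FQ_legal_below q i k s)]).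

Inductive greedy6 (q : nat -> nat) : nat -> seq nat -> Prop :=
  | G_term n : 0 < n -> greedy6 q (q n) [:: q n]
  | G_six : (forall n, 0 < n -> q n != 6) -> greedy6 q 6 [:: q 4; q 2]
  | G_step m l s :
      (forall n, 0 < n -> q n != m) -> m != 6 -> 0 < l ->
      q l < m -> m < q l.+1 ->
      greedy6 q (m - q l) s -> greedy6 q m (q l :: s).

From mathcomp Require Import all_boot zify.
Set Implicit Arguments. Unset Strict Implicit. Unset Printing Implicit Defensive.

(* The hypothesis pins q down to the explicit sequence [quilt], with
   quilt (n + 5) = quilt (n + 3) + quilt (n + 2): by strong induction on i,
   every k < quilt i has an FQ-legal decomposition below i while quilt i has
   none.  For this sequence the greedy length grows by at most one when a
   single term quilt j is added.  If a is the greedy leading index of m, either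
   j is so large that quilt j leads the greedy decomposition of m + quilt j, or
   an exchange identity rewrites quilt a + quilt j as quilt c + quilt d with
   d < a, and induction applies to the smaller remainders.  Adding the c_i
   copies of each q_i one at a time then gives the bound. *)

(* [quilt 0 = 0], so a summand [quilt 0] stands for an absent term. *)
Fixpoint quilt (n : nat) : nat :=
  match n with
  | S (S ((S ((S (S _)) as p)) as m)) => quilt m + quilt p
  | _ => n
  end.

Lemma quiltE5 n : quilt n.+3.+2 = quilt n.+3 + quilt n.+2.
Proof. by []. Qed.

Lemma ltn_quiltS n : quilt n < quilt n.+1.
Proof.
elim/ltn_ind: n => -[|[|[|[|[|n]]]]] // IH.
rewrite quiltE5 [quilt n.+4.+2]quiltE5; have := IH n.+2; have := IH n.+3; lia.
Qed.

Lemma leq_quilt : {mono quilt : m n / m <= n}.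
Proof. by apply: leq_mono; apply: homo_ltn ltn_quiltS => i j k; apply: ltn_trans. Qed.

Lemma ltn_quilt : {mono quilt : m n / m < n}.
Proof. exact: leqW_mono leq_quilt. Qed.

Lemma quilt_gt0 n : (0 < quilt n) = (0 < n).
Proof. exact: ltn_quilt 0 n. Qed.

Lemma ltn_quilt_id n : n < quilt n.+1.
Proof. by elim: n => // n IH; apply: leq_ltn_trans IH (ltn_quiltS _). Qed.

Lemma quiltE23 n : 4 < n -> quilt n = quilt (n - 2) + quilt (n - 3).
Proof.
by move=> n_gt4; have [k ->] : exists k, n = k.+3.+2 by exists (n - 5); lia.
Qed.

Lemma quiltE15 n : 6 < n -> quilt n = quilt (n - 1) + quilt (n - 5).
Proof.
move=> n_gt6; have [k ->] : exists k, n = k.+4.+3 by exists (n - 7); lia.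
by rewrite !subSS !subn0 !quiltE5; lia.
Qed.

Lemma quiltS_leq_double n : 0 < n -> quilt n.+1 <= (quilt n).*2.
Proof.
case: n => [|[|[|[|n]]]] // _; rewrite quiltE5 -addnn; apply: leq_add; rewrite leq_quilt; lia.
Qed.

Lemma quilt_neq6 n : quilt n != 6.
Proof.
apply/eqP=> qn6; have : quilt 5 < quilt n < quilt 6 by rewrite qn6.
by rewrite !ltn_quilt; lia.
Qed.

Lemma quilt_bracket m : exists a, quilt a <= m < quilt a.+1.
Proof.
elim: m => [|m [a /andP[lo hi]]]; first by exists 0.
case: (ltngtP m.+1 (quilt a.+1)) => [lt|gt|eq_m].
- by exists a; rewrite lt andbT ltnW.
- by move: gt; rewrite ltnNge hi.
- by exists a.+1; rewrite eq_m leqnn ltn_quiltS.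
Qed.

Lemma sum_rem (f : nat -> nat) s t :
  t \in s -> \sum_(l <- s) f l = f t + \sum_(l <- rem t s) f l.
Proof. by move=> ts; rewrite (perm_big _ (perm_to_rem ts)) big_cons. Qed.

Lemma legal_nil q i : FQ_legal_below q i 0 [::].
Proof. by split; rewrite ?big_nil. Qed.

Lemma legal_mem q i m s l : FQ_legal_below q i m s -> l \in s -> 0 < l < i.
Proof. by case=> _ /allP all_s _ _ _ /all_s. Qed.

Lemma legal_cons q i t k s :
  0 < t < i -> FQ_legal_below q (t - 4) k s -> FQ_legal_below q i (q t + k) (t :: s).
Proof.
move=> t_bd legal_s; case: (legal_s) => us _ sep no13 <-.
have s_lt l : l \in s -> l + 4 < t by move/(legal_mem legal_s); lia.
split.
- by rewrite /= us andbT; apply/negP => /s_lt; lia.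
- by rewrite /= t_bd; apply/allP => l /(legal_mem legal_s); lia.
- move=> a b; rewrite !inE => /orP[/eqP->|a_s] /orP[/eqP->|b_s].
  + by split; apply/eqP; lia.
  + by have := s_lt b b_s; split; apply/eqP; lia.
  + by have := s_lt a a_s; split; apply/eqP; lia.
  + exact: sep.
- apply/negP; rewrite !inE => /andP[/orP[/eqP t1|s1] /orP[/eqP t3|s3]].
  + by lia.
  + by have := s_lt 3 s3; lia.
  + by have := s_lt 1 s1; lia.
  + by move/negP: no13; apply; rewrite s1 s3.
- by rewrite big_cons.
Qed.

Lemma legal_rem q i i' m s t :
  FQ_legal_below q i m s -> t \in s -> (forall l, l \in s -> l != t -> l < i') ->
  FQ_legal_below q i' (m - q t) (rem t s).
Proof.
move=> legal_s ts s_lt; case: (legal_s) => us _ sep no13 sum_s.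
have rem_s l : l \in rem t s -> l \in s by apply: mem_rem.
split.
- exact: rem_uniq.
- apply/allP => l; rewrite mem_rem_uniq // => /andP[l_t ls].
  by rewrite (s_lt l ls l_t) andbT; case/andP: (legal_mem legal_s ls).
- by move=> a b /rem_s a_s /rem_s b_s; apply: sep.
- by apply: contra no13 => /andP[/rem_s-> /rem_s->].
- by rewrite -sum_s (sum_rem _ ts) addKn.
Qed.

Lemma eq_FQ_legal_below q q' i m s :
  (forall k, 0 < k < i -> q k = q' k) -> FQ_legal_below q i m s -> FQ_legal_below q' i m s.
Proof.
move=> eq_q legal_s; case: (legal_s) => us all_s sep no13 <-; split => //.
by apply: eq_big_seq => l /(legal_mem legal_s)/eq_q->.
Qed.

Lemma legal_quilt_lt i k m s :
  FQ_legal_below quilt i m s -> {in s, forall l, l <= k} -> m < quilt k.+3.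
Proof.
elim/ltn_ind: k m s => k IH m s legal_s s_le; case: (legal_s) => us _ sep _ sum_s.
case: k IH s_le => [|k] IH s_le.
  by rewrite -sum_s big1_seq // => l /andP[_ /s_le]; rewrite leqn0 => /eqP->.
have [ks|ks] := boolP (k.+1 \in s); last first.
  have s_le' : {in s, forall l, l <= k}.
    move=> l ls; move: (s_le l ls); rewrite leq_eqVlt ltnS => /orP[/eqP l_eq|//].
    by move: ks; rewrite -l_eq ls.
  by apply: ltn_trans (IH k _ _ _ legal_s s_le') (ltn_quiltS _).
have rest := legal_rem legal_s ks (fun l ls _ => proj2 (andP (legal_mem legal_s ls))).
have rest_le : {in rem k.+1 s, forall l, l <= k.-1}.
  move=> l; rewrite mem_rem_uniq // => /andP[/eqP l_neq ls].
  by have := s_le l ls; case: (sep _ _ ks ls) => /eqP ? _ _; lia.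
have step : quilt k.+1 + quilt k.-1.+3 <= quilt k.+4.
  by case: (k) => [|k'] //; rewrite quiltE5 addnC.
have := IH k.-1 (leq_ltn_trans (leq_pred k) (ltnSn k)) _ _ rest rest_le.
by rewrite -sum_s (sum_rem _ ks) addKn; lia.
Qed.

Fixpoint subseqs (T : Type) (s : seq T) : seq (seq T) :=
  if s is x :: s' then [seq x :: t | t <- subseqs s'] ++ subseqs s' else [:: [::]].

Lemma mem_subseqs (T : eqType) (s t : seq T) : subseq t s -> t \in subseqs s.
Proof.
elim: s t => [|x s IH] [|y t] //=; rewrite mem_cat.
- by rewrite IH ?orbT ?sub0seq.
- by case: eqP => [-> /IH/(map_f (cons x))->|_ /IH->]; rewrite ?orbT.
Qed.

Definition FQ_legalb (s : seq nat) : bool :=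
  all (fun a => all (fun b => [&& b + 1 != a, b + 3 != a & b + 4 != a]) s) s
  && ~~ ((1 \in s) && (3 \in s)).

Lemma quilt_not_legal_small_check :
  all (fun i => all (fun t => FQ_legalb t ==> all (fun l => l < i) t ==>
    (sumn (map quilt t) != quilt i)) (subseqs (iota 1 8))) (iota 1 9).
Proof. by vm_compute. Qed.

Lemma quilt_not_legal_small i s : 0 < i < 10 -> ~ FQ_legal_below quilt i (quilt i) s.
Proof.
move=> i_bd legal_s; case: (legal_s) => us _ sep no13 sum_s.
set t := [seq l <- iota 1 8 | l \in s].
have st : s =i t.
  move=> l; rewrite mem_filter mem_iota.
  by case ls: (l \in s) => //=; have := legal_mem legal_s ls; lia.
have legal_t : FQ_legalb t.
  apply/andP; split; last by rewrite -!st.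
  apply/allP => a; rewrite -st => a_s; apply/allP => b; rewrite -st => b_s.
  by case: (sep a b a_s b_s) => -> -> ->.
have t_lt : all (fun l => l < i) t.
  by apply/allP => l; rewrite -st => /(legal_mem legal_s)/andP[].
move/allP/(_ i): quilt_not_legal_small_check; rewrite mem_iota => /(_ i_bd).
move/allP/(_ t (mem_subseqs (filter_subseq _ _))); rewrite legal_t t_lt /=.
have perm_st : perm_eq s t by apply: uniq_perm; rewrite ?filter_uniq ?iota_uniq.
by rewrite sumnE big_map -(perm_big _ perm_st) sum_s eqxx.
Qed.

(* The largest index of the decomposition must be i - 1 or i - 2.  Removing
   it, and also i - 4 in the second case, leaves a legal decomposition of
   quilt (i - 5) or quilt (i - 8), or else a sum that [legal_quilt_lt] shows
   to be too small. *)
Section QuiltNotLegalLarge.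

Variables (i : nat) (s : seq nat).
Hypothesis i_gt9 : 9 < i.
Hypothesis IH : forall i' s', 0 < i' < i -> ~ FQ_legal_below quilt i' (quilt i') s'.
Hypothesis legal_s : FQ_legal_below quilt i (quilt i) s.

Let s_lt l : l \in s -> l < i.
Proof. by case/(legal_mem legal_s)/andP. Qed.

Let s_sep a b : a \in s -> b \in s -> [/\ b + 1 != a, b + 3 != a & b + 4 != a].
Proof. by case: legal_s => _ _ sep _ _; apply: sep. Qed.

Let sum_s : \sum_(l <- s) quilt l = quilt i.
Proof. by case: legal_s. Qed.

Let uniq_s : uniq s.
Proof. by case: legal_s. Qed.

Lemma legal_notin_sub1 : i - 1 \notin s.
Proof.
apply/negP => s1.
have qi := @quiltE15 i ltac:(lia).
have [s3|s3] := boolP (i - 3 \in s).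
  have s3' : i - 3 \in rem (i - 1) s by rewrite mem_rem_uniq // inE s3 andbT; apply/eqP; lia.
  have := sum_rem quilt s1; rewrite (sum_rem _ s3') sum_s qi.
  have : quilt (i - 5) < quilt (i - 3) by rewrite ltn_quilt; lia.
  lia.
apply: (IH (i' := i - 5) (s' := rem (i - 1) s)); first lia.
rewrite (_ : quilt (i - 5) = quilt i - quilt (i - 1)); last by rewrite qi addKn.
apply: (legal_rem legal_s s1) => l ls /eqP l_neq.
have l_neq3 : l != i - 3 by apply: contraNneq s3 => <-.
by have := s_lt ls; case: (s_sep s1 ls) => /eqP ? /eqP ? /eqP ?; move/eqP: l_neq3; lia.
Qed.

Lemma legal_notin_sub2 : i - 2 \notin s.
Proof.
apply/negP => s2.
have qi := @quiltE23 i ltac:(lia).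
have rest_legal := legal_rem legal_s s2 (fun l ls _ => s_lt ls).
have rest_lt l : l \in rem (i - 2) s -> l = i - 4 \/ l < i - 6.
  rewrite mem_rem_uniq // => /andP[/eqP l_neq ls].
  have l_neq1 : l != i - 1 by apply: contraNneq legal_notin_sub1 => <-.
  by have := s_lt ls; case: (s_sep s2 ls) => /eqP ? /eqP ? /eqP ?; move/eqP: l_neq1; lia.
have [s4|s4] := boolP (i - 4 \in rem (i - 2) s); last first.
  have rest_le : {in rem (i - 2) s, forall l, l <= i - 7}.
    move=> l l_rest; case: (rest_lt l l_rest) => [l_eq|]; last lia.
    by move: s4; rewrite -l_eq l_rest.
  have := legal_quilt_lt rest_legal rest_le.
  have : quilt (i - 7).+3 < quilt (i - 3) by rewrite ltn_quilt; lia.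
  rewrite qi; lia.
apply: (IH (i' := i - 8) (s' := rem (i - 4) (rem (i - 2) s))); first lia.
have q3 : quilt (i - 3) = quilt (i - 4) + quilt (i - 8).
  by rewrite quiltE15 -?subnDA //; lia.
rewrite (_ : quilt (i - 8) = quilt i - quilt (i - 2) - quilt (i - 4)); last first.
  by rewrite qi q3; lia.
apply: (legal_rem rest_legal s4) => l l_rest /eqP l_neq.
have s4' : i - 4 \in s by apply: mem_rem s4.
have ls : l \in s by apply: mem_rem l_rest.
by case: (rest_lt l l_rest) => //; case: (s_sep s4' ls) => /eqP ? /eqP ? /eqP ?; lia.
Qed.

Lemma quilt_not_legal_large : False.
Proof.
have s_le : {in s, forall l, l <= i - 3}.
  move=> l ls; have := s_lt ls.
  have : l != i - 1 by apply: contraNneq legal_notin_sub1 => <-.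
  have : l != i - 2 by apply: contraNneq legal_notin_sub2 => <-.
  move=> /eqP ? /eqP ?; lia.
have := legal_quilt_lt legal_s s_le.
have : quilt (i - 3).+3 <= quilt i by rewrite leq_quilt; lia.
lia.
Qed.

End QuiltNotLegalLarge.

Lemma quilt_not_legal i s : 0 < i -> ~ FQ_legal_below quilt i (quilt i) s.
Proof.
elim/ltn_ind: i s => i IH s i_gt0.
have [i_lt10|i_ge10] := ltnP i 10; first by apply: quilt_not_legal_small; rewrite i_gt0.
by apply: quilt_not_legal_large => // i' s' /andP[? ?]; apply: IH.
Qed.

Lemma quilt_legal i k : k < quilt i -> exists s, FQ_legal_below quilt i k s.
Proof.
elim/ltn_ind: k i => k IH i k_lt.
have [->|k_gt0] := posnP k; first by exists [::]; apply: legal_nil.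
have [k6|k_neq6] := eqVneq k 6.
  have i_gt4 : 4 < i by rewrite -ltn_quilt; apply: leq_ltn_trans k_lt; rewrite k6.
  exists [:: 4; 2]; split; rewrite ?k6 ?big_cons ?big_nil //=.
  - by rewrite i_gt4 (ltn_trans _ i_gt4).
  - by move=> a b; rewrite !inE => /orP[]/eqP-> /orP[]/eqP->.
have [t /andP[lo hi]] := quilt_bracket k.
have t_gt0 : 0 < t by case: t lo hi => // _ /=; lia.
have t_lt : t < i by rewrite -ltn_quilt; apply: leq_ltn_trans lo k_lt.
have [s legal_s] : exists s, FQ_legal_below quilt (t - 4) (k - quilt t) s.
  have [t_le5|t_gt5] := leqP t 5.
    exists [::]; rewrite (_ : k - quilt t = 0); first exact: legal_nil.
    by move: lo hi k_neq6; case: (t) t_le5 => [|[|[|[|[|[|t']]]]]] //= _; lia.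
  apply: IH; first by have := quilt_gt0 t; rewrite t_gt0; lia.
  by move: hi; rewrite (@quiltE15 t.+1) // subn1 subSS /=; lia.
by exists (t :: s); rewrite -(subnKC lo); apply: legal_cons legal_s; rewrite t_gt0.
Qed.

Lemma FQ_seq_quilt q : is_FQ_seq q -> forall i, 0 < i -> q i = quilt i.
Proof.
case=> _ hq; elim/ltn_ind=> i IH i_gt0.
have [_ no_dec all_dec] := hq i i_gt0.
have qE k : 0 < k < i -> q k = quilt k by case/andP=> k_gt0 k_lt; apply: IH.
have [lt|gt|//] := ltngtP (q i) (quilt i).
- have [s legal_s] := quilt_legal lt.
  by case: (no_dec s); apply: eq_FQ_legal_below legal_s => k /qE->.
- have [s legal_s] : exists s, FQ_legal_below q i (quilt i) s.
    by apply: all_dec; rewrite quilt_gt0 i_gt0.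
  by case: (@quilt_not_legal i s i_gt0); apply: eq_FQ_legal_below legal_s => k /qE.
Qed.

Lemma quilt_exchange a j : 7 <= a -> j < a + 5 ->
  exists c d, d < a /\ quilt a + quilt j = quilt c + quilt d.
Proof.
move=> a_ge7 j_le; case: (ltnP j a) => [j_lt|a_le]; first by exists a, j.
have [k [k_le4 ->]] : exists k, k <= 4 /\ j = k + a by exists (j - a); lia.
case: k k_le4 => [|[|[|[|[|//]]]]] _; rewrite ?addSn add0n;
  [exists a.+2, (a - 5) | exists a.+3, 0 | exists a.+3, (a - 3)
  | exists a.+4, (a - 5) | exists a.+4.+1, 0].
all: split; first lia.
all: have [b ->] : exists b, a = b.+4.+3 by exists (a - 7); lia.
all: rewrite ?subSS ?subn0 !quiltE5 /=; lia.
Qed.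

Fixpoint greedy_count k m :=
  if k is k'.+1 then
    if quilt k <= m then (greedy_count k' (m - quilt k)).+1 else greedy_count k' m
  else 0.

Definition greedy_len m := greedy_count m m.

Lemma greedy_count_stable k k' m :
  m < quilt k.+1 -> k <= k' -> greedy_count k' m = greedy_count k m.
Proof.
move=> m_lt; elim: k' => [|k' IH]; first by rewrite leqn0 => /eqP->.
rewrite leq_eqVlt ltnS => /orP[/eqP<- // | le_kk'] /=.
have : m < quilt k'.+1 by apply: leq_trans m_lt _; rewrite leq_quilt.
by rewrite ltnNge => /negbTE->; apply: IH.
Qed.

Lemma greedy_len_step a m :
  0 < a -> quilt a <= m < quilt a.+1 -> greedy_len m = (greedy_len (m - quilt a)).+1.
Proof.
case: a => // a _ /andP[lo hi].
have le_am : a.+1 <= m by apply: leq_trans (ltn_quilt_id _) lo.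
rewrite /greedy_len (greedy_count_stable hi le_am) /= lo; congr _.+1.
set r := m - quilt a.+1.
have r_lt : r < quilt a.+1.
  have := quiltS_leq_double (ltn0Sn a); rewrite -addnn /r; lia.
have [le_ar|lt_ra] := leqP a r.
- by rewrite (greedy_count_stable r_lt le_ar).
- by rewrite (greedy_count_stable (ltn_quilt_id r) (ltnW lt_ra)).
Qed.

Lemma greedy_len_add_large x j :
  5 < j -> x < quilt (j - 4) -> greedy_len (x + quilt j) = (greedy_len x).+1.
Proof.
move=> j_gt5 x_lt; rewrite (@greedy_len_step j) ?addnK //; first lia.
by rewrite leq_addl [quilt j.+1]quiltE15 // subn1 subSS /= addnC ltn_add2l.
Qed.

Lemma greedy_len_addq_small :
  all (fun x => all (fun j => greedy_len (x + quilt j) <= (greedy_len x).+1)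
    (iota 0 11)) (iota 0 9).
Proof. by vm_compute. Qed.

Lemma greedy_len_addq x j : greedy_len (x + quilt j) <= (greedy_len x).+1.
Proof.
elim/ltn_ind: x j => x IH j.
have [a /andP[lo hi]] := quilt_bracket x.
have large_j : a + 5 <= j -> 5 < j -> greedy_len (x + quilt j) = (greedy_len x).+1.
  move=> le_j j_gt5; apply: greedy_len_add_large j_gt5 (leq_trans hi _).
  by rewrite leq_quilt; lia.
(* Below quilt 7 = 9 the exchange identities are unavailable; there a finite
   check covers j < 11, and larger j satisfy a + 5 <= j. *)
have [x_lt9|x_ge9] := ltnP x 9.
  have a_lt7 : a < 7 by rewrite -ltn_quilt; apply: leq_ltn_trans lo x_lt9.
  have [j_lt11|j_ge11] := ltnP j 11; last by rewrite large_j //; lia.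
  move/allP/(_ x): greedy_len_addq_small; rewrite mem_iota => /(_ x_lt9).
  by move/allP/(_ j); rewrite mem_iota; apply.
have a_ge7 : 7 <= a by rewrite -ltnS -ltn_quilt; apply: leq_ltn_trans x_ge9 hi.
have [le_j|lt_j] := leqP (a + 5) j; first by rewrite large_j //; lia.
have [c [d [lt_da exch]]] := quilt_exchange a_ge7 lt_j.
have x_step : greedy_len x = (greedy_len (x - quilt a)).+1 by apply: greedy_len_step; lia.
have qd_lt : quilt d < quilt a by rewrite ltn_quilt.
have -> : x + quilt j = (x - quilt a + quilt d) + quilt c by lia.
apply: leq_trans (IH _ _ c) _; first lia.
by rewrite x_step ltnS IH //; lia.
Qed.

Lemma greedy_len_addqM x c j : greedy_len (x + c * quilt j) <= greedy_len x + c.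
Proof.
elim: c => [|c IH]; first by rewrite mul0n !addn0.
rewrite mulSn addnCA addnC addnS; apply: leq_trans (greedy_len_addq _ _) _.
by rewrite ltnS.
Qed.

Lemma greedy_len_sum (r : seq nat) (c : nat -> nat) :
  greedy_len (\sum_(i <- r) c i * quilt i) <= \sum_(i <- r) c i.
Proof.
elim: r => [|i r IH]; first by rewrite !big_nil.
rewrite !big_cons addnC; apply: leq_trans (greedy_len_addqM _ _ _) _.
by rewrite addnC leq_add2l.
Qed.

Section Greedy6.

Variable q : nat -> nat.
Hypothesis qE : forall n, 0 < n -> q n = quilt n.

Lemma greedy6_size m g : greedy6 q m g -> size g = greedy_len m.
Proof.
elim=> {m g} [n n_gt0 | _ | m l s _ _ l_gt0 lo hi _ IH].
- by rewrite qE // (@greedy_len_step n) ?subnn ?leqnn ?ltn_quiltS.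
- by []. (* 5 + 1 and Greedy-6's 4 + 2 both have two summands *)
- by rewrite !qE // in lo hi IH; rewrite /= IH [RHS](@greedy_len_step l) // (ltnW lo) hi.
Qed.

Lemma greedy6_exists m : 0 < m -> exists g, greedy6 q m g.
Proof.
elim/ltn_ind: m => m IH m_gt0.
have [a /andP[lo hi]] := quilt_bracket m.
have a_gt0 : 0 < a by case: a lo hi => // _ /=; lia.
have [qa_m|qa_neq] := eqVneq (quilt a) m.
  by exists [:: q a]; rewrite -qa_m -qE //; apply: G_term.
have [->|m_neq6] := eqVneq m 6.
  by exists [:: q 4; q 2]; apply: G_six => n n_gt0; rewrite qE ?quilt_neq6.
have qa_lt : quilt a < m by rewrite ltn_neqAle qa_neq.
have qa_gt0 : 0 < quilt a by rewrite quilt_gt0.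
have [g Hg] : exists g, greedy6 q (m - quilt a) g by apply: IH; lia.
exists (q a :: g); apply: G_step; rewrite ?qE //.
move=> n n_gt0; rewrite qE //; apply/eqP=> qn_m.
have : quilt a < quilt n < quilt a.+1 by rewrite qn_m qa_lt hi.
by rewrite !ltn_quilt; lia.
Qed.

End Greedy6.

Theorem mainTheorem18 (q : nat -> nat) (hq : is_FQ_seq q)
    (m : nat) (hm : 0 < m) (n : nat) (c : nat -> nat)
    (hD : m = \sum_(1 <= i < n.+1) c i * q i) :
  (exists g, greedy6 q m g) /\
  (forall g, greedy6 q m g -> size g <= \sum_(1 <= i < n.+1) c i).
Proof.
have qE := FQ_seq_quilt hq.
split; first exact: greedy6_exists q qE m hm.
move=> g /(greedy6_size qE) ->; rewrite hD.
rewrite (eq_big_nat _ _ (F2 := fun i => c i * quilt i)) ?greedy_len_sum //.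
by move=> i /andP[i_gt0 _]; rewrite qE.
Qed.
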